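(* Let $u,v,w\in\mathfrak{S}_n$ with $v\le u\le w$, and let $1\le r\le n-1$ with $s_r\notin\mathrm{supp}(w)$. Then (1) $\underline{T}(u,[v,s_rw])=\underline{T}(u,[v,w])$ and $\underline{T}(u,[v,ws_r])=\underline{T}(u,[v,w])$; (2) $\overline{T}(u,[v,s_rw])=\overline{T}(u,[v,w])\cup\{(u^{-1}(r),u^{-1}(r+1))\}$; (3) $\overline{T}(u,[v,ws_r])=\overline{T}(u,[v,w])\cup\{(r,r+1)\}$; (4) $\overline{T}(s_ru,[v,s_rw])=\overline{T}(u,[v,w])$; (5) $\underline{T}(s_ru,[v,s_rw])=\underline{T}(u,[v,w])\cup\{(u^{-1}(r),u^{-1}(r+1))\}$; (6) $\overline{T}(us_r,[v,ws_r])=\{(s_r(i),s_r(j)) : (i,j)\in\overline{T}(u,[v,w])\}$; (7) $\underline{T}(us_r,[v,ws_r])=\{(s_r(i),s_r(j)) : (i,j)\in\underline{T}(u,[v,w])\}\cup\{(r,r+1)\}$.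
   Context: $\mathfrak{S}_n$ with simple transpositions $s_i=(i,i+1)$, length $\ell$, Bruhat order $\le$, and $[x,y]=\{u: x\le u\le y\}$. $\mathrm{supp}(w)$ is the set of simple transpositions occurring in a reduced decomposition of $w$. $T$ is the set of transpositions $(i,j)$ of $[n]$ (a transposition is identified with the unordered pair it swaps). Products are composition of permutations, so $u(i,j)$ denotes $u$ composed on the right with the transposition $(i,j)$. For $u\in[v,w]$: $\overline{T}(u,[v,w])=\{(i,j)\in T: u<u(i,j)\le w,\ \ell(u(i,j))-\ell(u)=1\}$ and $\underline{T}(u,[v,w])=\{(i,j)\in T: v\le u(i,j)<u,\ \ell(u)-\ell(u(i,j))=1\}$. *)

From mathcomp Require Import all_boot all_order all_fingroup.
Set Implicit Arguments. Unset Strict Implicit. Unset Printing Implicit Defensive.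

(* [n] = {1,...,n} is modelled by 'I_n = {0,...,n-1} (element k+1 <-> ordinal k).
   Permutations of [n] are {perm 'I_n}. *)
Section Bruhat.
Variable n : nat.
Local Notation P := {perm 'I_n}.

(* Composition of permutations: (pcompose u t) x = u (t x).  (MathComp's group
   product is left-to-right: (t * u) x = u (t x).) *)
Definition pcompose (u t : P) : P := (t * u)%g.

(* Coxeter length = number of inversions. *)
Definition len (u : P) : nat :=
  #|[set p : 'I_n * 'I_n | (p.1 < p.2) && (u p.2 < u p.1)]|.

Definition bstep (x y : P) : bool :=
  [exists p : 'I_n * 'I_n,
     [&& p.1 != p.2, y == pcompose x (tperm p.1 p.2) & len x < len y]].
Definition ble (x y : P) : bool := connect bstep x y.
Definition blt (x y : P) : bool := ble x y && (x != y).

Definition simple (t : P) : bool :=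
  [exists i : 'I_n, exists j : 'I_n, (val j == (val i).+1) && (t == tperm i j)].

Definition reduced_dec (w : P) (s : seq P) : bool :=
  [&& all simple s, size s == len w & foldr pcompose 1%g s == w].

Definition in_supp (t w : P) : Prop := exists s, reduced_dec w s /\ t \in s.

(* transposition (i,j) identified with the unordered pair, stored as the
   ordered pair (min, max) *)
Definition tpair (i j : 'I_n) : 'I_n * 'I_n := if i < j then (i, j) else (j, i).

Definition Tbar (u v w : P) : {set 'I_n * 'I_n} :=
  [set p : 'I_n * 'I_n | [&& p.1 < p.2,
      blt u (pcompose u (tperm p.1 p.2)), ble (pcompose u (tperm p.1 p.2)) w &
      len (pcompose u (tperm p.1 p.2)) == (len u).+1]].
Definition Tunder (u v w : P) : {set 'I_n * 'I_n} :=
  [set p : 'I_n * 'I_n | [&& p.1 < p.2,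
      ble v (pcompose u (tperm p.1 p.2)), blt (pcompose u (tperm p.1 p.2)) u &
      len u == (len (pcompose u (tperm p.1 p.2))).+1]].
End Bruhat.

(* Since s is not in supp(w), w lies in the parabolic subgroup
   W_J of permutations stabilising {1, ..., r} (a reduced decomposition of w
   avoids s).  W_J is a lower set of Bruhat order, so v, u and every x <= w
   lie in W_J, and for x in W_J both s x and x s exceed x by one in length.
   Two further facts drive the identities:
   - the lifting property: if s y < y and z <= y then min(z, s z) <= s y;
     for y = s w' with w' in W_J it says min(z, s z) <= w' whenever z <= s w';
   - for x in W_J, if s x t (resp. x t s) lies in W_J for a transposition t,
     then x t = s x (resp. x t = x s).
   Each identity (2)-(7) is a double inclusion on pairs (p1, p2): the lifting
   property decides whether the neighbour u (p1 p2) stays below w or is the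
   new element s u, resp. u s.  Identity (1) is immediate, as the lower
   neighbours of u in [v, w] do not depend on w. *)

From mathcomp Require Import all_boot all_order all_fingroup zify.
Set Implicit Arguments. Unset Strict Implicit. Unset Printing Implicit Defensive.

Ltac is_ord x := let _ := constr:(nat_of_ord x) in idtac.

Ltac ord_lia := try subst; repeat match goal with
  | H : _ = false |- _ => move/negbT: H => H
  | H : is_true (~~ (_ || _)) |- _ => rewrite negb_or in H
  | H : is_true (~~ (_ && _)) |- _ => rewrite negb_and in H
  | H : is_true (_ && _) |- _ => case/andP: H => ? ?
  | H : is_true (_ || _) |- _ => case/orP: H => H
  | H : ~ (@eq _ ?x _) |- _ => is_ord x; move: (introN eqP H); clear H; rewrite -val_eqE /= => H
  | H : is_true (@eq_op _ ?x _) |- _ => is_ord x; rewrite -val_eqE /= in H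
  | H : is_true (~~ @eq_op _ ?x _) |- _ => is_ord x; rewrite -val_eqE /= in H
  | H : @eq _ ?x _ |- _ => is_ord x; move/(congr1 (@nat_of_ord _)): H => H
  | |- @eq (_ * _) (_, _) (_, _) => congr pair
  | |- @eq _ ?x _ => is_ord x; apply: ord_inj
  end; lia.

Ltac tperm_cases :=
  repeat (let E := fresh "E" in let E' := fresh "E" in
          case: tpermP => [E|E|E E']; try subst); intros.

Section Permutations.
Variable n : nat.
Local Notation P := {perm 'I_n}.

Lemma pcomposeE (x y : P) k : pcompose x y k = x (y k).
Proof. by rewrite /pcompose permM. Qed.

Lemma pcomposeA (x y z : P) : pcompose x (pcompose y z) = pcompose (pcompose x y) z.
Proof. by rewrite /pcompose mulgA. Qed.

Lemma pcompose_tpermK (x : P) (i j : 'I_n) :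
  pcompose (pcompose x (tperm i j)) (tperm i j) = x.
Proof. by rewrite /pcompose mulgA tperm2 mul1g. Qed.

Lemma tperm_conj (y : P) (c d : 'I_n) :
  (y * tperm c d = tperm (y^-1 c) (y^-1 d) * y)%g.
Proof. by rewrite -tpermJ conjgE invgK !mulgA mulgKV. Qed.

Definition inversions (x : P) : {set 'I_n * 'I_n} :=
  [set p : 'I_n * 'I_n | (p.1 < p.2) && (x p.2 < x p.1)].

Lemma lenE (x : P) : len x = #|inversions x|. Proof. by []. Qed.

(* Multiplying on the right by a transposition (i j) with i < j and
   x i < x j strictly increases the length: the inversions of x inject into
   those of x (i j), fixing the pairs through i or j that straddle the
   interval and swapping the others, and (i, j) is a new inversion. *)
Lemma len_tperm_lt (x : P) (i j : 'I_n) : i < j -> x i < x j ->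
  len x < len (pcompose x (tperm i j)).
Proof.
move=> lij xij; rewrite !lenE; set t := tperm i j; set y := pcompose x t.
have yE k : y k = x (t k) by rewrite pcomposeE.
pose fixed (p : 'I_n * 'I_n) :=
  ((p.1 == i) && (i < p.2 < j)) || ((p.2 == j) && (i < p.1 < j)).
pose psi p := if fixed p then p else (t p.1, t p.2).
have psi_inj : {in inversions x &, injective psi}.
  move=> [p1 p2] [q1 q2]; rewrite !inE /psi /fixed /t /= => /andP[lp _] /andP[lq _].
  case: ifP => /= F1; case: ifP => /= F2 [] E1 E2; first by subst.
  3: by move: E1 E2 => /perm_inj -> /perm_inj ->.
  1, 2: by move: F1 F2 E1 E2; tperm_cases; ord_lia.
have psi_sub : psi @: inversions x \subset inversions y.
  apply/subsetP => q /imsetP[[p1 p2] + ->]; rewrite !inE /= yE => /andP[lp xp].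
  rewrite /psi /fixed /=; case: ifP => /= F; rewrite !yE /t; last rewrite !tpermK xp andbT.
  1, 2: by move: F xp; tperm_cases; ord_lia.
have ij_new : (i, j) \in inversions y by rewrite inE /= !yE /t tpermL tpermR lij.
have ij_not_image : (i, j) \notin psi @: inversions x.
  apply/imsetP => -[[p1 p2]]; rewrite inE /psi /fixed /= => /andP[lp _].
  by case: ifP => /= F []; rewrite /t; tperm_cases; ord_lia.
rewrite -(card_in_imset psi_inj); apply: proper_card; apply/properP.
by split=> //; exists (i, j).
Qed.

Lemma lt_of_len_tperm (x : P) (i j : 'I_n) : i < j ->
  len x < len (pcompose x (tperm i j)) -> x i < x j.
Proof.
move=> lij l; case: (ltngtP (x i) (x j)) => // [xji|/val_inj/perm_inj eij].
  have := len_tperm_lt lij (_ : pcompose x (tperm i j) i < _).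
  by rewrite !pcomposeE tpermL tpermR pcompose_tpermK => /(_ xji); rewrite ltnNge ltnW.
by move: lij; rewrite eij ltnn.
Qed.

(* For an adjacent transposition the length grows by exactly one: every
   inversion of x (i i+1) other than (i, i+1) comes from one of x. *)
Lemma len_tperm_adjacent (x : P) (i j : 'I_n) : j = i.+1 :> nat -> x i < x j ->
  len (pcompose x (tperm i j)) = (len x).+1.
Proof.
move=> hij xij; have lij : i < j by rewrite hij.
apply/eqP; rewrite eqn_leq len_tperm_lt // andbT !lenE.
set t := tperm i j; set y := pcompose x t.
pose psi (p : 'I_n * 'I_n) := (t p.1, t p.2).
have sub : inversions y \subset psi @: inversions x :|: [set (i, j)].
  apply/subsetP => -[q1 q2]; rewrite !inE /= !pcomposeE => /andP[lq xq].
  have [->|qij] := eqVneq (q1, q2) (i, j); first by rewrite orbT.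
  apply/orP; left; apply/imsetP; exists (t q1, t q2); last by rewrite /psi /= !tpermK.
  rewrite inE /= xq andbT.
  by move: qij lq; rewrite xpair_eqE /t; tperm_cases; ord_lia.
apply: (leq_trans (subset_leq_card sub)); rewrite setUC cardsU1 addnC -addn1.
by apply: leq_add; [exact: leq_imset_card | case: (_ \notin _)].
Qed.

(* Inverting a permutation preserves its length: (p1, p2) |-> (x^-1 p2, x^-1 p1)
   maps inversions of x into inversions of x^-1. *)
Lemma len_inv (x : P) : len x^-1 = len x.
Proof.
have le_inv (y : P) : len y^-1 <= len y.
  pose g (p : 'I_n * 'I_n) := (y^-1%g p.2, y^-1%g p.1).
  have g_inj : injective g by move=> [p1 p2] [q1 q2] [/perm_inj -> /perm_inj ->].
  rewrite !lenE -(card_imset _ g_inj); apply/subset_leq_card/subsetP => q.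
  by case/imsetP=> -[p1 p2]; rewrite inE /= => /andP[lp yp] ->; rewrite inE /= !permKV yp.
by apply/eqP; rewrite eqn_leq le_inv /=; have := le_inv x^-1%g; rewrite invgK.
Qed.

Lemma bstepP (x y : P) :
  reflect (exists i j : 'I_n, [/\ i < j, y = pcompose x (tperm i j) & x i < x j])
          (bstep x y).
Proof.
apply: (iffP existsP) => [[[i j] /and3P[/= nij /eqP ->] l]|[i [j [lij -> xij]]]].
  case: (ltngtP i j) => [lij|lji|eij]; last by rewrite (val_inj eij) eqxx in nij.
    by exists i, j; split=> //; apply: lt_of_len_tperm.
  by exists j, i; rewrite tpermC in l *; split=> //; apply: lt_of_len_tperm.
exists (i, j); rewrite /= neq_ltn lij eqxx.
exact: len_tperm_lt.
Qed.

Lemma ble_tperm (x : P) (i j : 'I_n) : i != j ->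
  len x < len (pcompose x (tperm i j)) -> ble x (pcompose x (tperm i j)).
Proof. by move=> nij l; apply/connect1/existsP; exists (i, j); rewrite /= nij eqxx l. Qed.

Lemma bstep_len (x y : P) : bstep x y -> len x < len y.
Proof. by case/bstepP=> i [j [lij -> xij]]; apply: len_tperm_lt. Qed.

Lemma ble_tperm_down (u : P) (i j : 'I_n) : i != j ->
  len (pcompose u (tperm i j)) < len u -> ble (pcompose u (tperm i j)) u.
Proof.
by move=> nij l; rewrite -{2}(pcompose_tpermK u i j) ble_tperm // pcompose_tpermK.
Qed.

Lemma ble_eq_or_len_lt (x y : P) : ble x y -> x = y \/ len x < len y.
Proof.
case/connectP=> p; elim: p x => [|z p IH] x /=; first by move=> _ ->; left.
case/andP=> /bstep_len lxz /IH h /h [<-|lzy]; right=> //; exact: ltn_trans lzy.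
Qed.

Lemma ble_ind (Q : P -> Prop) (y : P) : Q y ->
  (forall x z, bstep x z -> ble z y -> Q z -> Q x) -> forall x, ble x y -> Q x.
Proof.
move=> Qy step x /connectP[p]; elim: p x => [|z p IH] x /=; first by move=> _ <-.
case/andP=> xz pz ey; apply: (step x z xz); last exact: IH.
by apply/connectP; exists p.
Qed.

Lemma pcompose_tperm_inv (x : P) (i j : 'I_n) :
  (pcompose x (tperm i j))^-1%g = pcompose x^-1 (tperm (x i) (x j)).
Proof. by rewrite /pcompose invMg tpermV tperm_conj invgK. Qed.

Lemma bstep_inv (x y : P) : bstep x y -> bstep x^-1 y^-1.
Proof.
move/existsP=> [[i j] /and3P[/= nij /eqP -> l]]; apply/existsP; exists (x i, x j).
by rewrite /= (inj_eq perm_inj) nij !len_inv l pcompose_tperm_inv eqxx.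
Qed.

Lemma ble_inv (x y : P) : ble x y -> ble x^-1 y^-1.
Proof.
move=> xy; apply: (@ble_ind (fun x => ble x^-1 y^-1) y) xy; first exact: connect0.
by move=> x' z /bstep_inv/connect1 xz _; apply: connect_trans.
Qed.

Lemma adjacent_descent (w : P) : 0 < len w ->
  exists k k' : 'I_n, k' = k.+1 :> nat /\ w k' < w k.
Proof.
rewrite lenE card_gt0 => /set0Pn[[i j]]; rewrite inE /= => /andP[].
move: {2}(j - i) (erefl (j - i)) => d; elim: d i => [|d IH] i ed lij wji; first by lia.
have hi : i.+1 < n by apply: leq_ltn_trans (ltn_ord j).
case: (ltngtP (w (Ordinal hi)) (w i)) => [desc|asc|/val_inj/perm_inj]; first by exists i, (Ordinal hi).
- have [eij|nij] := eqVneq (Ordinal hi) j; first by move: asc wji; rewrite eij; lia.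
  apply: (IH (Ordinal hi)); rewrite /=; [lia | ord_lia | exact: ltn_trans wji asc].
- by move/(congr1 (@nat_of_ord _)) => /=; lia.
Qed.

(* A permutation without inversions is the identity: it is increasing, as
   is its inverse, hence k <= w k and k <= w^-1 k for every k. *)
Lemma len0_id (w : P) : len w = 0 -> w = 1%g.
Proof.
have incr (x : P) : len x = 0 -> forall k : 'I_n, k <= x k.
  move=> l0; suff: forall m (k : 'I_n), k = m :> nat -> m <= x k by move=> + k; apply.
  elim=> [//|m IH] k ek; have hm : m < n by rewrite -ek ltnW.
  apply: leq_ltn_trans (IH (Ordinal hm) erefl) _.
  case: (ltngtP (x (Ordinal hm)) (x k)) => // [xkm|/val_inj/perm_inj /(congr1 val)/=]; last by lia.
  have : (Ordinal hm, k) \in inversions x by rewrite inE /= ek ltnSn xkm.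
  by move: l0; rewrite lenE => /eqP; rewrite cards_eq0 => /eqP ->; rewrite inE.
move=> l0; apply/permP=> k; apply/val_inj; rewrite perm1 /=; apply/eqP.
rewrite eqn_leq incr // andbT; have := incr w^-1%g; rewrite len_inv => /(_ l0 (w k)).
by rewrite permK.
Qed.

(* Every permutation has a reduced decomposition: peel off a left descent. *)
Lemma exists_reduced (w : P) : exists ss, reduced_dec w ss.
Proof.
move: {2}(len w) (erefl (len w)) => m; elim: m w => [|m IH] w lw.
  by exists [::]; rewrite /reduced_dec /= lw (len0_id lw) !eqxx.
have [k [k' [ek desc]]] : exists k k' : 'I_n, k' = k.+1 :> nat /\ w^-1%g k' < w^-1%g k.
  by apply: adjacent_descent; rewrite len_inv lw.
set t := tperm k k'; set w' := pcompose t w.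
have wt : pcompose t w' = w by rewrite /w' /pcompose -mulgA tperm2 mulg1.
have lw' : len w = (len w').+1.
  have w'V : w'^-1%g = pcompose w^-1 t by rewrite /w' /pcompose invMg tpermV.
  have := @len_tperm_adjacent (pcompose w^-1 t) k k' ek.
  by rewrite !pcomposeE tpermL tpermR pcompose_tpermK -w'V !len_inv => ->.
have [ss /and3P[all_simple /eqP size_ss /eqP prod_ss]] : exists ss, reduced_dec w' ss.
  by apply: IH; move: lw; rewrite lw' => -[].
exists (t :: ss); rewrite /reduced_dec /= prod_ss wt size_ss lw' !eqxx all_simple !andbT.
by apply/existsP; exists k; apply/existsP; exists k'; rewrite -ek !eqxx.
Qed.

(* Membership in Tbar and Tunder: the strict comparison with u is implied by
   the length condition. *)
Lemma TbarE (u v w : P) (p : 'I_n * 'I_n) : (p \in Tbar u v w) =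
  [&& p.1 < p.2, ble (pcompose u (tperm p.1 p.2)) w &
      len (pcompose u (tperm p.1 p.2)) == (len u).+1].
Proof.
rewrite inE; case: p => p1 p2 /=; apply/and4P/and3P=> [[lp _ bw le]|[lp bw /eqP le]] //.
split=> //; last by rewrite le.
rewrite /blt ble_tperm ?neq_ltn ?lp ?le //=.
by apply/eqP=> e; move: le; rewrite -e; lia.
Qed.

Lemma TunderE (u v w : P) (p : 'I_n * 'I_n) : (p \in Tunder u v w) =
  [&& p.1 < p.2, ble v (pcompose u (tperm p.1 p.2)) &
      len u == (len (pcompose u (tperm p.1 p.2))).+1].
Proof.
rewrite inE; case: p => p1 p2 /=; apply/and4P/and3P=> [[lp bv _ le]|[lp bv /eqP le]] //.
split=> //; last by rewrite le.
rewrite /blt ble_tperm_down ?neq_ltn ?lp ?le //=.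
by apply/eqP=> e; move: le; rewrite e; lia.
Qed.

Lemma tpair_sorted (i j : 'I_n) : i < j -> tpair i j = (i, j).
Proof. by rewrite /tpair => ->. Qed.

Lemma tpairC (i j : 'I_n) : tpair i j = tpair j i.
Proof.
by rewrite /tpair; case: (ltngtP i j) => // /val_inj ->.
Qed.

Lemma tpair_lt (i j : 'I_n) : i != j -> (tpair i j).1 < (tpair i j).2.
Proof. by rewrite /tpair neq_ltn; case: ifP => //= ->. Qed.

Lemma tpair_symmetric (T : Type) (F : 'I_n -> 'I_n -> T) (i j : 'I_n) :
  (forall c d, F c d = F d c) -> F (tpair i j).1 (tpair i j).2 = F i j.
Proof. by move=> FC; rewrite /tpair; case: ifP. Qed.

Lemma tperm_tpair (i j : 'I_n) : tperm (tpair i j).1 (tpair i j).2 = tperm i j.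
Proof. exact/tpair_symmetric/tpermC. Qed.

Lemma tperm_eq_tpair (i j c d : 'I_n) : i < j -> tperm i j = tperm c d -> (i, j) = tpair c d.
Proof.
move=> lij /(congr1 (fun t : {perm 'I_n} => t i)) /=; rewrite tpermL.
case: tpermP => [ic jd|id jc|_ _ ji]; subst; first by rewrite tpair_sorted.
  by rewrite tpairC tpair_sorted.
by rewrite ltnn in lij.
Qed.

Lemma ble_3cycle (z : P) (p q r : 'I_n) : p < q -> q < r -> z p < z q -> z q < z r ->
  ble z (pcompose (pcompose z (tperm p q)) (tperm p r)) /\
  ble z (pcompose (pcompose z (tperm q r)) (tperm p r)).
Proof.
move=> pq qr zpq zqr; have pr := ltn_trans pq qr.
have [npq nqr npr] : [/\ p != q, q != r & p != r] by rewrite !neq_ltn pq qr pr.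
have [nqp nrp] : q != p /\ r != p by rewrite !(eq_sym _ p).
split; apply: connect_trans (ble_tperm _ (len_tperm_lt _ _)) (ble_tperm _ _) => //.
- by apply: len_tperm_lt; rewrite // !pcomposeE tpermL (tpermD npr nqr).
- by apply: len_tperm_lt; rewrite // !pcomposeE tpermR (tpermD nqp nrp).
Qed.
End Permutations.

Section Parabolic.
Variables (n : nat) (a b : 'I_n).
Hypothesis hab : b = a.+1 :> nat.
Local Notation P := {perm 'I_n}.
Local Notation s := (tperm a b).
Local Notation Ls x := (pcompose (tperm a b) x).
Local Notation Rs x := (pcompose x (tperm a b)).

Lemma a_lt_b : a < b. Proof. by rewrite hab. Qed.
Lemma a_neq_b : a != b. Proof. by rewrite neq_ltn a_lt_b. Qed.

Lemma LsK (x : P) : Ls (Ls x) = x.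
Proof. by rewrite /pcompose -mulgA tperm2 mulg1. Qed.

Lemma LsV (x : P) : (Ls x)^-1%g = Rs x^-1.
Proof. by rewrite /pcompose invMg tpermV. Qed.

Lemma RsV (x : P) : (Rs x)^-1%g = Ls x^-1.
Proof. by rewrite /pcompose invMg tpermV. Qed.

Lemma Ls_tperm (x : P) : Ls x = pcompose x (tperm (x^-1%g a) (x^-1%g b)).
Proof. by rewrite /pcompose tperm_conj. Qed.

Lemma Rs_tperm (x : P) (q1 q2 : 'I_n) :
  pcompose (Rs x) (tperm q1 q2) = Rs (pcompose x (tperm (s q1) (s q2))).
Proof. by rewrite /pcompose -(tpermJ q1 q2 s) conjgE tpermV !mulgA tperm2 mul1g. Qed.

Lemma tperm_eq_Ls (x : P) (i j : 'I_n) : i < j ->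
  pcompose x (tperm i j) = Ls x <-> (i, j) = tpair (x^-1%g a) (x^-1%g b).
Proof.
move=> lij; rewrite Ls_tperm; split=> [/mulIg|e]; first exact: tperm_eq_tpair.
by rewrite -[tperm (x^-1%g a) _]tperm_tpair -e.
Qed.

Lemma tperm_eq_Rs (x : P) (i j : 'I_n) : i < j ->
  pcompose x (tperm i j) = Rs x <-> (i, j) = (a, b).
Proof.
move=> lij; split=> [/mulIg|[-> ->] //].
by move/(tperm_eq_tpair lij); rewrite tpair_sorted // a_lt_b.
Qed.

(* x lies in the parabolic subgroup generated by the simple transpositions
   other than s, i.e. x stabilises the initial segment {0, ..., a}. *)
Definition parabolic (x : P) : bool := [forall k : 'I_n, (k <= a) == (x k <= a)].

Lemma parabolicP (x : P) : parabolic x -> forall k : 'I_n, (k <= a) = (x k <= a).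
Proof. by move=> /forallP px k; move: (px k) => /eqP. Qed.

Lemma parabolic_mul (x y : P) : parabolic x -> parabolic y -> parabolic (pcompose x y).
Proof. by move=> /parabolicP px /parabolicP py; apply/forallP=> k; rewrite pcomposeE -px -py. Qed.

Lemma parabolic_inv (x : P) : parabolic x -> parabolic x^-1.
Proof. by move/parabolicP=> px; apply/forallP=> k; rewrite (px (x^-1%g k)) permKV. Qed.

Lemma parabolic_simple (t : P) : simple t -> t != s -> parabolic t.
Proof.
case/existsP=> i /existsP[j /andP[/eqP /= ej /eqP ->]] nts.
have nia : i != a.
  apply: contraNneq nts => ia; have jb : j = b by ord_lia.
  by rewrite ia jb.
by apply/forallP=> k; apply/eqP; case: tpermP => [->|->|//]; apply/idP/idP; ord_lia.
Qed.

(* If s is not in the support of w, then w is parabolic: a reduced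
   decomposition of w avoiding s is a product of parabolic factors. *)
Lemma parabolic_not_supp (w : P) : ~ in_supp s w -> parabolic w.
Proof.
move=> ns; have [ss red] := exists_reduced w.
have s_notin : s \notin ss by apply/negP=> sin; apply: ns; exists ss.
case/and3P: red => all_simple _ /eqP <-.
elim: ss all_simple s_notin => [|t ss IH] /=; first by move=> _ _; apply/forallP=> k; rewrite perm1.
case/andP=> st sss; rewrite in_cons negb_or => /andP[nts sns].
by apply: parabolic_mul (IH sss sns); apply: parabolic_simple; rewrite // eq_sym.
Qed.

(* The parabolic subgroup is a lower set of Bruhat order: a covering
   x < x (i j) inside it must swap two points on the same side of a. *)
Lemma parabolic_ble (x y : P) : ble x y -> parabolic y -> parabolic x.
Proof.
move=> xy; apply: (@ble_ind n (fun x => parabolic y -> parabolic x) y) xy => // x' z.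
case/bstepP=> i [j [lij -> xij]] _ IH /IH /parabolicP pz; apply/forallP=> k; apply/eqP.
have := pz i; have := pz j; rewrite !pcomposeE tpermL tpermR => pj pi.
have same_side : (i <= a) = (j <= a).
  apply/idP/idP=> [ia|ja]; last exact: leq_trans (ltnW lij) ja.
  by rewrite pj (leq_trans (ltnW xij)) // -pi.
have -> : x' k = pcompose x' (tperm i j) (tperm i j k) by rewrite pcomposeE tpermK.
by rewrite -pz; case: tpermP => [->|->|].
Qed.

Lemma parabolic_lt (x : P) : parabolic x -> x a < x b.
Proof.
move/parabolicP=> px; apply: (@leq_ltn_trans a); first by rewrite -px.
by rewrite ltnNge -px -ltnNge a_lt_b.
Qed.

Lemma len_Rs_cases (x : P) :
  (x a < x b /\ len (Rs x) = (len x).+1) \/ (x b < x a /\ len x = (len (Rs x)).+1).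
Proof.
case: (ltngtP (x a) (x b)) => [lt|gt|/val_inj/perm_inj eab].
- by left; split; last exact: len_tperm_adjacent.
- right; split=> //; rewrite -{1}(pcompose_tpermK x a b).
  by apply: len_tperm_adjacent; rewrite // !pcomposeE tpermL tpermR.
- by move: a_neq_b; rewrite eab eqxx.
Qed.

Lemma len_Ls_cases (x : P) :
  (x^-1%g a < x^-1%g b /\ len (Ls x) = (len x).+1) \/
  (x^-1%g b < x^-1%g a /\ len x = (len (Ls x)).+1).
Proof. by rewrite -(len_inv (Ls x)) -(len_inv x) LsV; apply: len_Rs_cases. Qed.

Lemma len_Rs_parabolic (x : P) : parabolic x -> len (Rs x) = (len x).+1.
Proof.
move/parabolic_lt=> xab; case: (len_Rs_cases x) => [[] //|[xba _]].
by move: xab; rewrite ltnNge ltnW.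
Qed.

Lemma len_Ls_parabolic (x : P) : parabolic x -> len (Ls x) = (len x).+1.
Proof.
by move/parabolic_inv=> px; rewrite -(len_inv (Ls x)) -(len_inv x) LsV len_Rs_parabolic.
Qed.

Lemma ble_Ls (x : P) : len x < len (Ls x) -> ble x (Ls x).
Proof.
move=> l; apply/connect1/existsP; exists (x^-1%g a, x^-1%g b).
by rewrite /= (inj_eq perm_inj) a_neq_b -Ls_tperm eqxx l.
Qed.

Lemma ble_Rs (x : P) : len x < len (Rs x) -> ble x (Rs x).
Proof. by move=> l; apply: ble_tperm l; exact: a_neq_b. Qed.

Lemma parabolic_ble_Ls (x : P) : parabolic x -> ble x (Ls x).
Proof. by move=> px; apply: ble_Ls; rewrite len_Ls_parabolic. Qed.

Lemma parabolic_ble_Rs (x : P) : parabolic x -> ble x (Rs x).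
Proof. by move=> px; apply: ble_Rs; rewrite len_Rs_parabolic. Qed.

Lemma ble_Ls_mono (x y : P) : ble x y -> parabolic y -> ble (Ls x) (Ls y).
Proof.
move=> xy; apply: (@ble_ind n (fun x => parabolic y -> ble (Ls x) (Ls y)) y) xy => [_|x' z].
  exact: connect0.
move=> xz zy IH py; apply: connect_trans (IH py).
have pz := parabolic_ble zy py; have px := parabolic_ble (connect1 xz) pz.
have lxz := bstep_len xz; case/bstepP: xz => i [j [lij ez _]].
rewrite ez pcomposeA; apply: ble_tperm; first by rewrite neq_ltn lij.
by rewrite -pcomposeA -ez !len_Ls_parabolic.
Qed.

Lemma ble_Rs_mono (x y : P) : ble x y -> parabolic y -> ble (Rs x) (Rs y).
Proof.
move=> xy py; have := ble_Ls_mono (ble_inv xy) (parabolic_inv py).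
by move/ble_inv; rewrite !LsV !invgK.
Qed.

(* If x and x t s are both parabolic for a transposition t, then t = s:
   otherwise t s would send a point across a. *)
Lemma parabolic_Rs_tperm (x : P) (i j : 'I_n) : parabolic x ->
  parabolic (Rs (pcompose x (tperm i j))) -> pcompose x (tperm i j) = Rs x.
Proof.
move=> /parabolicP px /parabolicP py.
have moved c c' : s c' = c -> (c <= a) != (c' <= a) -> (c == i) || (c == j).
  move=> sc' side; apply/negPn/negP; rewrite negb_or => /andP[ic jc].
  move: side (py c'); rewrite !pcomposeE sc' tpermD 1?eq_sym // -px.
  by move=> + e; rewrite e eqxx.
have side : (a <= a) != (b <= a) by rewrite hab leqnn ltnn.
have side' : (b <= a) != (a <= a) by rewrite eq_sym.
have /orP[/eqP ai|/eqP aj] := moved a b (tpermR a b) side.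
all: have /orP[/eqP bi|/eqP bj] := moved b a (tpermL a b) side'.
- by move: a_neq_b; rewrite ai bi eqxx.
- by rewrite -ai -bj.
- by rewrite -aj -bi tpermC.
- by move: a_neq_b; rewrite aj bj eqxx.
Qed.

Lemma parabolic_Ls_tperm (x : P) (i j : 'I_n) : parabolic x ->
  parabolic (Ls (pcompose x (tperm i j))) -> pcompose x (tperm i j) = Ls x.
Proof.
move=> px /parabolic_inv; rewrite LsV pcompose_tperm_inv => pxt.
have := parabolic_Rs_tperm (parabolic_inv px) pxt.
by move/(congr1 (fun y : P => y^-1%g)); rewrite -pcompose_tperm_inv RsV !invgK.
Qed.

(* Writing s z = z (pa pb) with
   pa = z^-1 a < pb = z^-1 b, either (i j) = (pa pb), or s z (i j) is a
   3-cycle of positions i < pb < j or i < pa < j reached by two coverings. *)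
Lemma ble_lift_step (z : P) (i j : 'I_n) : i < j -> z i < z j ->
  z^-1%g a < z^-1%g b ->
  (pcompose z (tperm i j))^-1%g b < (pcompose z (tperm i j))^-1%g a ->
  ble z (Ls (pcompose z (tperm i j))).
Proof.
have invE k : (pcompose z (tperm i j))^-1%g k = tperm i j (z^-1%g k).
  by rewrite /pcompose invMg tpermV permM.
move=> lij zij; rewrite !invE pcomposeA Ls_tperm.
have za := permKV z a; have zb := permKV z b.
move: (z^-1%g a) (z^-1%g b) za zb => pa pb za zb ab.
have nab : pa != pb by rewrite neq_ltn ab.
case: (tpermP i j pa) => [pai|paj|nia nja];
  case: (tpermP i j pb) => [pbi|pbj|nib njb] ji; try subst pa; try subst pb.
all: try by move: lij ab ji; lia.
- by rewrite pcompose_tpermK; apply: connect0.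
- have zjb : b < z j.
    have : z j != b by rewrite -zb (inj_eq perm_inj); apply/eqP=> e; exact: njb (esym e).
    by move=> ?; rewrite za in zij; ord_lia.
  by case: (ble_3cycle ab ji (_ : z i < z pb) (_ : z pb < z j)); rewrite ?za ?zb ?a_lt_b.
- have zia : z i < a.
    have : z i != a by rewrite -za (inj_eq perm_inj); apply/eqP=> e; exact: nia (esym e).
    by move=> ?; rewrite zb in zij; ord_lia.
  by case: (ble_3cycle ji ab (_ : z i < z pa) (_ : z pa < z j)); rewrite ?za ?zb ?a_lt_b.
Qed.

(* Lifting property: if s y < y and z <= y, then min(z, s z) <= s y.
   Induction along a chain from z up to y, using ble_lift_step when the
   chain and left multiplication by s cross. *)
Lemma lifting (y z : P) : len (Ls y) < len y -> ble z y ->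
  (len (Ls z) < len z -> ble (Ls z) (Ls y)) /\ (len z < len (Ls z) -> ble z (Ls y)).
Proof.
move=> ly zy.
apply: (@ble_ind n (fun z => (len (Ls z) < len z -> ble (Ls z) (Ls y)) /\
  (len z < len (Ls z) -> ble z (Ls y))) y) zy => [|x z' xz _ [IH1 IH2]].
  by split=> [_|l]; [exact: connect0 | move: (ltn_trans l ly); rewrite ltnn].
have lxz := bstep_len xz; case/bstepP: xz => i [j [lij ez xij]].
have ble_xz : ble x z' by rewrite ez; apply: ble_tperm; [rewrite neq_ltn lij | rewrite -ez].
split=> lx; case: (len_Ls_cases z') => [[_ lz]|[lz' lz]].
- apply: connect_trans (IH2 _); last by rewrite lz.
  by apply: connect_trans ble_xz; move: (ble_Ls (x := Ls x)); rewrite LsK; apply.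
- apply: connect_trans (IH1 _); last by rewrite lz.
  rewrite ez pcomposeA; apply: ble_tperm; first by rewrite neq_ltn lij.
  rewrite -pcomposeA -ez; case: (len_Ls_cases x) => [[_ lx']|[_ lx']]; move: lx lxz; lia.
- by apply: connect_trans ble_xz (IH2 _); rewrite lz.
- apply: connect_trans (IH1 _); last by rewrite lz.
  rewrite ez; apply: ble_lift_step; rewrite -?ez //.
  by case: (len_Ls_cases x) => [[] //|[_ lx']]; move: lx; lia.
Qed.

Lemma lift_Ls (y z : P) : parabolic y -> ble z (Ls y) ->
  (len z < len (Ls z) -> ble z y) /\ (len (Ls z) < len z -> ble (Ls z) y).
Proof.
move=> py zy; have := lifting _ zy; rewrite LsK len_Ls_parabolic // ltnSn.
by case=> // h1 h2; split.
Qed.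

Lemma lift_Rs (y z : P) : parabolic y -> ble z (Rs y) ->
  (len z < len (Rs z) -> ble z y) /\ (len (Rs z) < len z -> ble (Rs z) y).
Proof.
move=> /parabolic_inv py /ble_inv; rewrite RsV => zy.
have [h1 h2] := lift_Ls py zy; rewrite -(len_inv (Rs z)) RsV -(len_inv z).
by split=> [/h1|/h2] /ble_inv; rewrite ?invgK // LsV !invgK.
Qed.

Definition spair (p : 'I_n * 'I_n) : 'I_n * 'I_n := tpair (s p.1) (s p.2).

Lemma spair_lt (p : 'I_n * 'I_n) : p.1 < p.2 -> (spair p).1 < (spair p).2.
Proof. by move=> lp; apply: tpair_lt; rewrite (inj_eq perm_inj) neq_ltn lp. Qed.

Lemma spairK (p : 'I_n * 'I_n) : p.1 < p.2 -> spair (spair p) = p.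
Proof.
case: p => p1 p2 /= lp; rewrite /spair.
rewrite (tpair_symmetric (F := fun c d => tpair (s c) (s d))) ?tpermK ?tpair_sorted //.
by move=> c d; exact: tpairC.
Qed.

Lemma tperm_spair (p : 'I_n * 'I_n) : tperm (spair p).1 (spair p).2 = tperm (s p.1) (s p.2).
Proof. exact/tpair_symmetric/tpermC. Qed.

Section Identities.
Variables (u v w : P).
Hypotheses (pw : parabolic w) (huw : ble u w).
Let pu : parabolic u := parabolic_ble huw pw.

(* (2): below s w, the new upper neighbour of u is s u. *)
Lemma Tbar_Ls_top : Tbar u v (Ls w) = Tbar u v w :|: [set tpair (u^-1%g a) (u^-1%g b)].
Proof.
apply/setP=> -[p1 p2]; rewrite in_setU in_set1 !TbarE /=.
set x := pcompose u (tperm p1 p2).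
apply/and3P/orP=> [[lp bx lx]|[/and3P[lp bx lx]|/eqP e]].
- have [h1 h2] := lift_Ls pw bx.
  case: (len_Ls_cases x) => [[_ e]|[_ e]]; first by left; rewrite lp lx h1 // e.
  right; apply/eqP/tperm_eq_Ls => //.
  by apply: parabolic_Ls_tperm pu (parabolic_ble (h2 _) pw); rewrite e.
- by split=> //; apply: connect_trans bx (parabolic_ble_Ls pw).
- have lp : p1 < p2.
    by have := @tpair_lt _ (u^-1%g a) (u^-1%g b); rewrite -e (inj_eq perm_inj) a_neq_b; apply.
  have -> : x = Ls u by apply/tperm_eq_Ls.
  by rewrite lp ble_Ls_mono // len_Ls_parabolic.
Qed.

(* (3): below w s, the new upper neighbour of u is u s. *)
Lemma Tbar_Rs_top : Tbar u v (Rs w) = Tbar u v w :|: [set (a, b)].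
Proof.
apply/setP=> -[p1 p2]; rewrite in_setU in_set1 !TbarE /=.
set x := pcompose u (tperm p1 p2).
apply/and3P/orP=> [[lp bx lx]|[/and3P[lp bx lx]|/eqP e]].
- have [h1 h2] := lift_Rs pw bx.
  case: (len_Rs_cases x) => [[_ e]|[_ e]]; first by left; rewrite lp lx h1 // e.
  right; apply/eqP/tperm_eq_Rs => //.
  by apply: parabolic_Rs_tperm pu (parabolic_ble (h2 _) pw); rewrite e.
- by split=> //; apply: connect_trans bx (parabolic_ble_Rs pw).
- by case: e => e1 e2; rewrite /x e1 e2 a_lt_b ble_Rs_mono // len_Rs_parabolic.
Qed.

(* (4): multiplying u and w on the left by s does not change the upper
   neighbours: the only candidate x with s x <= s w but x not <= w would be
   x = s u, which has the wrong length. *)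
Lemma Tbar_Ls_both : Tbar (Ls u) v (Ls w) = Tbar u v w.
Proof.
apply/setP=> -[p1 p2]; rewrite !TbarE /= -pcomposeA (len_Ls_parabolic pu).
set x := pcompose u (tperm p1 p2).
apply/and3P/and3P=> [[lp bx /eqP lx]|[lp bx /eqP lx]].
- have [h1 h2] := lift_Ls pw bx; rewrite LsK in h1 h2.
  case: (len_Ls_cases x) => [[_ e]|[_ e]].
    by split=> //; [apply: h2 | apply/eqP]; move: lx; rewrite e; lia.
  have pLx : parabolic (Ls x) by apply: parabolic_ble (h1 _) pw; rewrite e.
  have xu : x = Ls u := parabolic_Ls_tperm pu pLx.
  by move: lx; rewrite xu LsK; lia.
- have px : parabolic x := parabolic_ble bx pw.
  by rewrite ble_Ls_mono // len_Ls_parabolic // lx.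
Qed.

(* (5): the lower neighbours of s u are those of u together with u itself. *)
Lemma Tunder_Ls_both : ble v u ->
  Tunder (Ls u) v (Ls w) = Tunder u v w :|: [set tpair (u^-1%g a) (u^-1%g b)].
Proof.
move=> hvu; have pv : parabolic v := parabolic_ble hvu pu.
apply/setP=> -[p1 p2]; rewrite in_setU in_set1 !TunderE /= -pcomposeA (len_Ls_parabolic pu).
set x := pcompose u (tperm p1 p2).
have xu_tperm : pcompose (Ls x) (tperm p1 p2) = Ls u by rewrite -pcomposeA pcompose_tpermK.
apply/and3P/orP=> [[lp bv /eqP [lx]]|[/and3P[lp bv /eqP lx]|/eqP e]].
- have bxu : ble (Ls x) (Ls u).
    by rewrite -xu_tperm ble_tperm ?neq_ltn ?lp // xu_tperm (len_Ls_parabolic pu) lx.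
  have [h1 h2] := lift_Ls pu bxu; rewrite LsK in h1 h2.
  case: (len_Ls_cases x) => [[_ e]|[_ e]].
    have px : parabolic x by apply: parabolic_ble (h2 _) pu; rewrite e.
    left; rewrite lp (lift_Ls px bv).1 ?len_Ls_parabolic //.
    by rewrite lx e eqxx.
  have bLxu : ble (Ls x) u by apply: h1; rewrite e.
  have [xu|] := ble_eq_or_len_lt bLxu; last by rewrite lx ltnn.
  right; apply/eqP/tperm_eq_Ls => //.
  by rewrite -/x -xu LsK.
- have px : parabolic x.
    by apply: parabolic_ble pu; apply: ble_tperm_down; rewrite ?neq_ltn ?lp // lx.
  split=> //; first exact: connect_trans bv (parabolic_ble_Ls px).
  by rewrite len_Ls_parabolic // lx.
- have lp : p1 < p2.
    by have := @tpair_lt _ (u^-1%g a) (u^-1%g b); rewrite -e (inj_eq perm_inj) a_neq_b; apply.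
  have -> : x = Ls u by apply/tperm_eq_Ls.
  by split; rewrite ?LsK.
Qed.

Lemma Tbar_Rs_both : Tbar (Rs u) v (Rs w) = spair @: Tbar u v w.
Proof.
apply/setP=> -[q1 q2]; rewrite TbarE /= Rs_tperm (len_Rs_parabolic pu).
set x := pcompose u (tperm (s q1) (s q2)).
apply/and3P/imsetP=> [[lq bx /eqP lx]|[[p1 p2] + e]].
- have [h1 h2] := lift_Rs pw bx; rewrite pcompose_tpermK in h1 h2.
  case: (len_Rs_cases x) => [[_ e]|[_ e]]; last first.
    have pRx : parabolic (Rs x) by apply: parabolic_ble (h1 _) pw; rewrite e.
    have xu : x = Rs u := parabolic_Rs_tperm pu pRx.
    by move: lx; rewrite xu pcompose_tpermK; lia.
  exists (spair (q1, q2)); last by rewrite spairK.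
  rewrite TbarE tperm_spair spair_lt // -/x h2 ?e //=.
  by apply/eqP; move: lx; rewrite e => -[].
- rewrite TbarE /= => /and3P[lp bp /eqP lp2].
  have xE : x = pcompose u (tperm p1 p2).
    by rewrite /x -(tperm_spair (q1, q2)) e spairK.
  have px : parabolic x by rewrite xE; apply: parabolic_ble bp pw.
  split; first by have := @spair_lt (p1, p2) lp; rewrite -e.
    by rewrite xE; apply: ble_Rs_mono.
  by rewrite len_Rs_parabolic // xE lp2.
Qed.

(* (7): the lower neighbours of u s are the s-conjugates of those of u,
   together with u itself. *)
Lemma Tunder_Rs_both : ble v u ->
  Tunder (Rs u) v (Rs w) = spair @: Tunder u v w :|: [set (a, b)].
Proof.
move=> hvu; have pv : parabolic v := parabolic_ble hvu pu.
apply/setP=> -[q1 q2]; rewrite in_setU in_set1 TunderE /= Rs_tperm (len_Rs_parabolic pu).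
set x := pcompose u (tperm (s q1) (s q2)).
apply/and3P/orP=> [[lq bv /eqP [lx]]|[/imsetP[[p1 p2] + e]|/eqP e]].
- have xt : pcompose (Rs x) (tperm q1 q2) = Rs u by rewrite -Rs_tperm pcompose_tpermK.
  have bxu : ble (Rs x) (Rs u).
    by rewrite -xt ble_tperm ?neq_ltn ?lq // xt (len_Rs_parabolic pu) lx.
  have [h1 h2] := lift_Rs pu bxu; rewrite pcompose_tpermK in h1 h2.
  case: (len_Rs_cases x) => [[_ e]|[_ e]].
    have px : parabolic x by apply: parabolic_ble (h2 _) pu; rewrite e.
    left; apply/imsetP; exists (spair (q1, q2)); last by rewrite spairK.
    rewrite TunderE tperm_spair spair_lt // -/x (lift_Rs px bv).1 ?len_Rs_parabolic //.
    by rewrite lx e eqxx.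
  have bRxu : ble (Rs x) u by apply: h1; rewrite e.
  have [xu|] := ble_eq_or_len_lt bRxu; last by rewrite lx ltnn.
  right; apply/eqP/(tperm_eq_Rs (Rs u)) => //.
  by rewrite [RHS]pcompose_tpermK Rs_tperm -/x xu.
- rewrite TunderE /= => /and3P[lp bp /eqP lp2].
  have xE : x = pcompose u (tperm p1 p2).
    by rewrite /x -(tperm_spair (q1, q2)) e spairK.
  have px : parabolic x.
    by rewrite xE; apply: parabolic_ble pu; apply: ble_tperm_down; rewrite ?neq_ltn ?lp // lp2.
  rewrite -xE in bp lp2; split; first by have := @spair_lt (p1, p2) lp; rewrite -e.
    exact: connect_trans bp (parabolic_ble_Rs px).
  by rewrite len_Rs_parabolic // lp2.
- case: e => e1 e2; rewrite /x e1 e2 a_lt_b tpermL tpermR tpermC pcompose_tpermK.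
  by split.
Qed.
End Identities.
End Parabolic.

Theorem lemma5p6 (n : nat) (u v w : {perm 'I_n}) (a b : 'I_n) :
  val b = (val a).+1 ->
  ble v u -> ble u w ->
  ~ in_supp (tperm a b) w ->
  let sr := tperm a b in
  ((Tunder u v (pcompose sr w) = Tunder u v w /\ Tunder u v (pcompose w sr) = Tunder u v w) /\
      Tbar u v (pcompose sr w) = Tbar u v w :|: [set tpair (u^-1%g a) (u^-1%g b)] /\
      Tbar u v (pcompose w sr) = Tbar u v w :|: [set (a, b)] /\
      Tbar (pcompose sr u) v (pcompose sr w) = Tbar u v w /\
      Tunder (pcompose sr u) v (pcompose sr w)
        = Tunder u v w :|: [set tpair (u^-1%g a) (u^-1%g b)] /\
      Tbar (pcompose u sr) v (pcompose w sr)
        = [set tpair (sr p.1) (sr p.2) | p in Tbar u v w] /\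
      Tunder (pcompose u sr) v (pcompose w sr)
        = [set tpair (sr p.1) (sr p.2) | p in Tunder u v w] :|: [set (a, b)]).
Proof.
move=> hab hvu huw not_supp sr.
have pw : parabolic a w := parabolic_not_supp hab not_supp.
(* (1) holds by definition: Tunder does not depend on the top of the interval. *)
split; first by [].
split; first exact (Tbar_Ls_top hab v pw huw).
split; first exact (Tbar_Rs_top hab v pw huw).
split; first exact (Tbar_Ls_both hab v pw huw).
split; first exact (Tunder_Ls_both hab pw huw hvu).
split; first exact (Tbar_Rs_both hab v pw huw).
exact (Tunder_Rs_both hab pw huw hvu).
Qed.
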